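(* Let $A=A^T\in\mathbb{R}^{n\times n}$, let $s$ be an integer with $1\leq s<d(A)$, and let $v_0\in\mathbb{R}^n$ with $\|v_0\|=1$ and $d(A,v_0)=s+1$. Consider the iteration $\widetilde v_{k+1}=P_s(A;v_k)v_k$, $v_{k+1}=\widetilde v_{k+1}/\|\widetilde v_{k+1}\|$, $k=0,1,2,\dots$. Then $v_0=v_2=v_4=\cdots$.
   Context: $d(A)$ is the degree of the minimal polynomial of $A$; $d(A,v)$ is the grade of $v$ w.r.t. $A$ (degree of the monic polynomial $p$ of smallest degree with $p(A)v=0$); $\mathcal{K}_k(A,v)=\mathrm{span}\{v,Av,\dots,A^{k-1}v\}$; $\mathcal{M}_s$ is the set of real monic polynomials of degree $s$; $\|\cdot\|$ is the Euclidean norm. For $v$ with $d(A,v)\geq s$, $P_s(\cdot\,;v)\in\mathcal{M}_s$ denotes the unique monic polynomial of degree $s$ such that $P_s(A;v)v\perp\mathcal{K}_s(A,v)$. (Under the hypotheses all $\widetilde v_k$ are nonzero.) *)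

From HB Require Import structures.
From mathcomp Require Import all_boot all_order all_algebra.
From mathcomp Require Import boolp classical_sets.
From mathcomp Require Import reals.
Set Implicit Arguments. Unset Strict Implicit. Unset Printing Implicit Defensive.
Import Order.TTheory GRing.Theory Num.Theory.
Local Open Scope ring_scope.

Section Defs.
Variables (R : realType) (n : nat).
Implicit Types (A : 'M[R]_n) (p : {poly R}) (u v w : 'cV[R]_n).

Definition polymx A p : 'M[R]_n := \sum_(i < size p) p`_i *: A ^+ i.
Definition polyapp A p v : 'cV[R]_n := \sum_(i < size p) p`_i *: (A ^+ i *m v).
Definition dotv u w : R := \sum_(i < n) u i 0 * w i 0.
Definition normv v : R := Num.sqrt (dotv v v).

Definition is_minpoly_deg A (d : nat) : Prop :=
  (exists p, p \is monic /\ size p = d.+1 /\ polymx A p = 0) /\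
  (forall p, p \is monic -> polymx A p = 0 -> (d.+1 <= size p)%N).

Definition is_grade A v (d : nat) : Prop :=
  (exists p, p \is monic /\ size p = d.+1 /\ polyapp A p v = 0) /\
  (forall p, p \is monic -> polyapp A p v = 0 -> (d.+1 <= size p)%N).

(* Krylov space K_k(A,v): the row space of the matrix with rows (A^i v)^T, i < k *)
Definition krylov A (k : nat) v : 'M[R]_(k, n) := \matrix_(i < k) (A ^+ i *m v)^T.

Definition is_Ps A (s : nat) v p : Prop :=
  p \is monic /\ size p = s.+1 /\
  forall w, (w^T <= krylov A s v)%MS -> dotv w (polyapp A p v) = 0.

Definition Ps A (s : nat) v : {poly R} := xget 0 [set p | is_Ps A s v p].

Fixpoint iterv A (s : nat) v0 (k : nat) : 'cV[R]_n :=
  match k with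
  | 0 => v0
  | k'.+1 => let u := iterv A s v0 k' in
             let t := polyapp A (Ps A s u) u in
             (normv t)^-1 *: t
  end.
End Defs.

From HB Require Import structures.
From mathcomp Require Import all_boot all_order all_algebra.
From mathcomp Require Import boolp classical_sets reals.
Set Implicit Arguments. Unset Strict Implicit. Unset Printing Implicit Defensive.
Import Order.TTheory GRing.Theory Num.Theory.
Local Open Scope ring_scope.

(* Let [q = P_s(.;v)], [t = q(A) v], and [m] the monic annihilator of [v] of
   degree [s+1]. As [A] is symmetric, [<f(A) v, t> = <v, (fq)(A) v>] vanishes
   whenever [m] divides [fq]; together with [t] being orthogonal to
   [K_s(A,v)] this forces [q] and [m] to be coprime. Bezout then yields [r] of
   degree at most [s] with [r(A) t = v]. Since [v] is orthogonal to
   [K_s(A,t)], [r] has degree exactly [s], its monic normalisation is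
   [P_s(.;t)], and [<r(A) t, v> = <t, r(A) v> = <t, t>] shows that
   [P_s(A;t) t] is a positive multiple of [v]. *)

Section DotProduct.
Variables (R : realType) (n : nat).
Implicit Types (u v w : 'cV[R]_n).

Lemma dotvE u w : dotv u w = (u^T *m w) 0 0.
Proof. by rewrite /dotv mxE; apply: eq_bigr => i _; rewrite mxE. Qed.

Lemma dotvC u w : dotv u w = dotv w u.
Proof. by apply: eq_bigr => i _; rewrite mulrC. Qed.

Lemma dotvDr u w1 w2 : dotv u (w1 + w2) = dotv u w1 + dotv u w2.
Proof. by rewrite /dotv -big_split; apply: eq_bigr => i _; rewrite mxE mulrDr. Qed.

Lemma dotvZr u a w : dotv u (a *: w) = a * dotv u w.
Proof. by rewrite /dotv mulr_sumr; apply: eq_bigr => i _; rewrite mxE mulrCA. Qed.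

Lemma dotvNr u w : dotv u (- w) = - dotv u w.
Proof. by rewrite -scaleN1r dotvZr mulN1r. Qed.

Lemma dotv0r u : dotv u 0 = 0.
Proof. by rewrite -(scale0r 0) dotvZr mul0r. Qed.

Lemma dotvZl u a w : dotv (a *: u) w = a * dotv u w.
Proof. by rewrite dotvC dotvZr dotvC. Qed.

Lemma dotvDl u1 u2 w : dotv (u1 + u2) w = dotv u1 w + dotv u2 w.
Proof. by rewrite dotvC dotvDr !(dotvC w). Qed.

Lemma dotvv_ge0 u : 0 <= dotv u u.
Proof. by apply: sumr_ge0 => i _; rewrite -expr2 sqr_ge0. Qed.

Lemma dotvv_eq0 u : (dotv u u == 0) = (u == 0).
Proof.
apply/idP/eqP => [|->]; last by rewrite dotv0r.
rewrite psumr_eq0 => [/allP u0|i _]; last by rewrite -expr2 sqr_ge0.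
apply/matrixP => i j; rewrite (ord1 j) mxE.
by have /= := u0 i (mem_index_enum _); rewrite -expr2 sqrf_eq0 => /eqP.
Qed.

Lemma dotvv_gt0 u : (0 < dotv u u) = (u != 0).
Proof. by rewrite lt0r dotvv_eq0 dotvv_ge0 andbT. Qed.

Lemma normv_gt0 u : (0 < normv u) = (u != 0).
Proof. by rewrite sqrtr_gt0 dotvv_gt0. Qed.

Lemma normvZ a u : 0 <= a -> normv (a *: u) = a * normv u.
Proof.
move=> a_ge0; rewrite /normv dotvZl dotvZr mulrA sqrtrM ?mulr_ge0 //.
by rewrite -expr2 sqrtr_sqr ger0_norm.
Qed.

Definition normalize u := (normv u)^-1 *: u.

Lemma normalizeZ a u : 0 < a -> normalize (a *: u) = normalize u.
Proof.
move=> a_gt0; rewrite /normalize normvZ ?ltW // scalerA invfM mulrAC.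
by rewrite mulVf ?gt_eqF // mul1r.
Qed.

Lemma normalize_id u : normv u = 1 -> normalize u = u.
Proof. by rewrite /normalize => ->; rewrite invr1 scale1r. Qed.

End DotProduct.

Lemma gram_unitmx (R : realType) (k m : nat) (K : 'M[R]_(k, m)) :
  row_free K -> K *m K^T \in unitmx.
Proof.
move=> /row_free_inj K_inj; rewrite -row_free_unit; apply: inj_row_free => x xG0.
apply: K_inj; rewrite /= mul0mx; apply: trmx_inj; apply/eqP.
rewrite trmx0 -dotvv_eq0 dotvE trmxK trmx_mul mulmxA -(mulmxA x) xG0.
by rewrite !mul0mx mxE.
Qed.

Lemma size_monicB (R : nzRingType) (p q : {poly R}) :
  p \is monic -> q \is monic -> size p = size q -> (size (p - q)%R < size p)%N.
Proof.
move=> p_monic q_monic eq_pq; have := monic_neq0 p_monic.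
rewrite -size_poly_eq0; case sz_p: (size p) => [//|k] _.
have lead_p : p`_k = 1 by rewrite -(monicP p_monic) lead_coefE sz_p.
have lead_q : q`_k = 1 by rewrite -(monicP q_monic) lead_coefE -eq_pq sz_p.
apply/leq_sizeP => j; rewrite leq_eqVlt => /orP[/eqP <-|lt_kj].
  by rewrite coefB lead_p lead_q subrr.
by rewrite coefB !nth_default ?subrr // -?eq_pq sz_p.
Qed.

Definition ps_step (R : realType) (n : nat) (A : 'M[R]_n) (s : nat) u :=
  normalize (polyapp A (Ps A s u) u).

Lemma iterv_succ (R : realType) (n : nat) (A : 'M[R]_n) s v0 k :
  iterv A s v0 k.+1 = ps_step A s (iterv A s v0 k).
Proof. by []. Qed.

Lemma is_Ps_Ps (R : realType) (n : nat) (A : 'M[R]_n) s v p :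
  is_Ps A s v p -> is_Ps A s v (Ps A s v).
Proof. by move=> Ps_p; rewrite /Ps; case: xgetP => //= /(_ p). Qed.

Lemma trmxX (R : comNzRingType) (n : nat) (A : 'M[R]_n.+1) k :
  (A ^+ k)^T = A^T ^+ k.
Proof.
elim: k => [|k IHk]; first by rewrite !expr0 trmx1.
by rewrite exprS -mulmxE trmx_mul IHk mulmxE -exprSr.
Qed.

Section Krylov.
Variables (R : realType) (n : nat) (A : 'M[R]_n.+1).
Local Notation M p := (horner_mx A p).
Implicit Types (p q f : {poly R}) (u v w : 'cV[R]_n.+1).

Lemma horner_mx_wide k p :
  (size p <= k)%N -> M p = \sum_(i < k) p`_i *: A ^+ i.
Proof.
move=> /take_poly_id {1}<-; rewrite /take_poly poly_def linear_sum.
by apply: eq_bigr => i _; rewrite linearZ /= rmorphXn /= horner_mx_X.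
Qed.

Lemma polyappE p v : polyapp A p v = M p *m v.
Proof.
rewrite (horner_mx_wide (leqnn _)) mulmx_suml.
by apply: eq_bigr => i _; rewrite scalemxAl.
Qed.

Lemma krylov_mulmx s v (D : 'rV_s) :
  (D *m krylov A s v)^T = M (rVpoly D) *m v.
Proof.
rewrite (horner_mx_wide (size_poly _ _)) mulmx_sum_row linear_sum mulmx_suml.
apply: eq_bigr => i _; rewrite rowK linearZ /= trmxK coef_rVpoly_ord.
by rewrite scalemxAl.
Qed.

Lemma sub_krylovP s v w :
  (w^T <= krylov A s v)%MS <->
  exists2 f : {poly R}, (size f <= s)%N & w = M f *m v.
Proof.
split=> [/submxP[D wD]|[f f_small ->]].
  by exists (rVpoly D); rewrite ?size_poly // -krylov_mulmx -wD trmxK.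
by apply/submxP; exists (poly_rV f); rewrite -[RHS]trmxK krylov_mulmx poly_rV_K.
Qed.

Lemma is_PsE s v p : is_Ps A s v p <->
  [/\ p \is monic, size p = s.+1 &
      forall f, (size f <= s)%N -> dotv (M f *m v) (M p *m v) = 0].
Proof.
split=> [[p_monic [sz_p p_orth]]|[p_monic sz_p p_orth]].
  split=> // f f_small; rewrite -[M p *m v]polyappE; apply: p_orth.
  by apply/sub_krylovP; exists f.
do 2!split=> //; move=> w /sub_krylovP[f f_small ->].
by rewrite polyappE p_orth.
Qed.

Lemma is_PsZ s v p a : is_Ps A s v p -> is_Ps A s (a *: v) p.
Proof.
move=> /is_PsE[p_monic sz_p p_orth]; apply/is_PsE; split=> // f f_small.
by rewrite -!scalemxAr dotvZl dotvZr p_orth ?mulr0.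
Qed.

Lemma is_Ps_vec_uniq s v p q :
  is_Ps A s v p -> is_Ps A s v q -> M p *m v = M q *m v.
Proof.
move=> /is_PsE[p_monic sz_p p_orth] /is_PsE[q_monic sz_q q_orth].
have small_pq : (size (p - q)%R <= s)%N.
  by rewrite -ltnS -sz_p size_monicB // sz_p sz_q.
apply/eqP; rewrite -subr_eq0 -mulmxBl -raddfB -dotvv_eq0.
by rewrite {2}raddfB mulmxBl dotvDr dotvNr p_orth // q_orth // subrr.
Qed.

Lemma ps_stepE s v p : is_Ps A s v p -> ps_step A s v = normalize (M p *m v).
Proof.
move=> Ps_p; rewrite /ps_step polyappE.
by rewrite (is_Ps_vec_uniq (is_Ps_Ps Ps_p) Ps_p).
Qed.

Lemma grade_annihilator_eq0 s v f :
  is_grade A v s.+1 -> (size f <= s.+1)%N -> M f *m v = 0 -> f = 0.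
Proof.
move=> [_ grade_min] f_small fv0; apply/eqP; apply: contraT => f_neq0.
have lc_neq0 : lead_coef f != 0 by rewrite lead_coef_eq0.
have monic_f : (lead_coef f)^-1 *: f \is monic by rewrite monicE lead_coefZ mulVf.
have := grade_min _ monic_f; rewrite polyappE linearZ /= -scalemxAl fv0 scaler0.
by rewrite size_scale ?invr_eq0 // => /(_ erefl) /leq_trans /(_ f_small); rewrite ltnn.
Qed.

Lemma grade_neq0 s v : is_grade A v s.+1 -> v != 0.
Proof.
move=> grade_v; apply/eqP => v0.
have := @grade_annihilator_eq0 s v 1 grade_v.
by rewrite size_poly1 v0 mulmx0 => /(_ isT erefl) /eqP; rewrite oner_eq0.
Qed.

Lemma krylov_row_free s v : is_grade A v s.+1 -> row_free (krylov A s v).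
Proof.
move=> grade_v; apply/inj_row_free => x xK0.
have := congr1 trmx xK0; rewrite krylov_mulmx trmx0.
move/(grade_annihilator_eq0 grade_v); rewrite leqW ?size_poly // => /(_ isT).
by move=> x0; rewrite -[x]rVpolyK x0 linear0.
Qed.

(* [P_s(A;v) v] is [A^s v] minus its orthogonal projection onto the Krylov
   space; [c] solves the normal equations of the Gram matrix [G]. *)
Lemma Ps_exists s v : row_free (krylov A s v) -> exists q, is_Ps A s v q.
Proof.
set K := krylov A s v => K_free; pose G := K *m K^T.
pose c := (A ^+ s *m v)^T *m K^T *m invmx G.
have sz_c : (size (rVpoly c) < size ('X^s : {poly R}))%N.
  by rewrite size_polyXn ltnS size_poly.
exists ('X^s - rVpoly c); apply/is_PsE; split.
- by rewrite monicE lead_coefDl ?size_polyN // lead_coefXn.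
- by rewrite size_polyDl ?size_polyN // size_polyXn.
move=> f f_small; rewrite dotvE -{1}(poly_rV_K f_small) -krylov_mulmx trmxK.
rewrite raddfB /= rmorphXn /= horner_mx_X mulmxBl -krylov_mulmx -mulmxA.
suff -> : K *m (A ^+ s *m v - (c *m K)^T) = 0 by rewrite mulmx0 mxE.
apply: trmx_inj; rewrite trmx_mul linearB /= trmxK trmx0 mulmxBl.
by rewrite -mulmxA mulmxKV ?subrr // gram_unitmx.
Qed.

Lemma horner_mx_annih_dvdp m p v :
  M m *m v = 0 -> m %| p -> M p *m v = 0.
Proof. by move=> mv0 /dvdpP[h ->]; rewrite rmorphM -mulmxE -mulmxA mv0 mulmx0. Qed.

Lemma horner_mx_modp_annih m p v :
  M m *m v = 0 -> M (p %% m) *m v = M p *m v.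
Proof.
move=> mv0; rewrite [in RHS](divp_eq p m) raddfD mulmxDl.
by rewrite (horner_mx_annih_dvdp mv0 (dvdp_mull _ (dvdpp m))) add0r.
Qed.

Hypothesis symA : A^T = A.

Lemma horner_mx_tr p : (M p)^T = M p.
Proof.
rewrite (horner_mx_wide (leqnn _)) linear_sum; apply: eq_bigr => i _.
by rewrite linearZ /= trmxX symA.
Qed.

Lemma dotv_horner_mx p u w : dotv (M p *m u) w = dotv u (M p *m w).
Proof. by rewrite !dotvE trmx_mul horner_mx_tr mulmxA. Qed.

End Krylov.

Section PsBackward.
Variables (R : realType) (n : nat) (A : 'M[R]_n.+1) (s : nat).
Variables (v : 'cV[R]_n.+1) (m q : {poly R}).
Hypotheses (symA : A^T = A) (grade_v : is_grade A v s.+1).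
Hypotheses (sz_m : size m = s.+2) (m_annih : horner_mx A m *m v = 0).
Hypothesis Ps_q : is_Ps A s v q.
Local Notation M p := (horner_mx A p).
Local Notation t := (M q *m v).

Let q_monic : q \is monic. Proof. by case/is_PsE: Ps_q. Qed.
Let sz_q : size q = s.+1. Proof. by case/is_PsE: Ps_q. Qed.
Let q_orth (f : {poly R}) : (size f <= s)%N -> dotv (M f *m v) t = 0.
Proof. by case/is_PsE: Ps_q => _ _; apply. Qed.

Lemma Ps_vec_neq0 : t != 0.
Proof.
apply/eqP => /(grade_annihilator_eq0 grade_v); rewrite sz_q leqnn => /(_ isT).
by move/eqP; rewrite -size_poly_eq0 sz_q.
Qed.

Lemma dotv_Ps_vec_dvdp f : m %| f * q -> dotv (M f *m v) t = 0.
Proof.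
move=> m_fq; rewrite dotv_horner_mx // mulmxA -[M f *m M q]/(M f * M q) -rmorphM.
by rewrite (horner_mx_annih_dvdp m_annih m_fq) dotv0r.
Qed.

(* A common factor [u] of [q] and [m] of small degree would make [t] orthogonal
   to itself: reduce [q] modulo [u]. *)
Lemma coprimep_Ps_annihilator : coprimep q m.
Proof.
have q_neq0 : q != 0 by rewrite -size_poly_eq0 sz_q.
have m_neq0 : m != 0 by rewrite -size_poly_eq0 sz_m.
apply: contraT => /(Bezout_coprimepPn q_neq0 m_neq0).
case=> [[u w]] /= /andP[/andP[u_gt0 sz_u] _] uq_wm.
have u_neq0 : u != 0 by rewrite -size_poly_gt0.
have /eqP : dotv t t = 0.
  rewrite {1}(divp_eq q u) raddfD mulmxDl dotvDl dotv_Ps_vec_dvdp; last first.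
    by rewrite -mulrA uq_wm mulrA dvdp_mull.
  have lt_r_u : (size (q %% u)%R < size u)%N by rewrite ltn_modp.
  by rewrite add0r q_orth // -ltnS (leq_trans lt_r_u) // -ltnS -sz_m.
by rewrite dotvv_eq0 (negPf Ps_vec_neq0).
Qed.

Let horner_mx_Ps_vec f : M f *m t = M (f * q) *m v.
Proof. by rewrite mulmxA rmorphM. Qed.

(* Bezout for [q] and [m] inverts [q(A)] on the cyclic space of [v]. *)
Lemma Ps_vec_cyclic : exists2 r : {poly R}, (size r <= s.+1)%N & M r *m t = v.
Proof.
have [[u w] /=] := Bezout_coprimepP _ _ coprimep_Ps_annihilator.
rewrite -size_poly_eq1 => /size_poly1P[c c_neq0 uq_wm].
have m_neq0 : m != 0 by rewrite -size_poly_eq0 sz_m.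
exists (c^-1 *: (u %% m)).
  by rewrite size_scale ?invr_eq0 // -ltnS -sz_m ltn_modp.
rewrite linearZ /= -scalemxAl horner_mx_Ps_vec -(horner_mx_modp_annih _ m_annih).
rewrite mulrC modp_mul mulrC.
have -> : u * q = c%:P - w * m by rewrite -uq_wm addrK.
rewrite modpD modpN modp_mull subr0 modp_small; last first.
  by rewrite size_polyC c_neq0 sz_m.
by rewrite horner_mx_C mul_scalar_mx scalerA mulVf ?scale1r.
Qed.

Lemma Ps_back : exists r k, [/\ is_Ps A s t r, 0 < k & M r *m t = k *: v].
Proof.
have [r0 r0_small r0t] := Ps_vec_cyclic.
have v_neq0 := grade_neq0 grade_v.
have sz_r0 : size r0 = s.+1.
  apply/eqP; rewrite eqn_leq r0_small leqNgt ltnS; apply/negP => r0_small'.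
  have /eqP := q_orth r0_small'; rewrite dotvC -dotv_horner_mx // r0t.
  by rewrite dotvv_eq0 (negPf v_neq0).
have l_neq0 : lead_coef r0 != 0 by rewrite lead_coef_eq0 -size_poly_eq0 sz_r0.
set r := (lead_coef r0)^-1 *: r0.
have r_monic : r \is monic by rewrite monicE lead_coefZ mulVf.
have sz_r : size r = s.+1 by rewrite size_scale ?invr_eq0.
have rt : M r *m t = (lead_coef r0)^-1 *: v by rewrite linearZ /= -scalemxAl r0t.
exists r, (lead_coef r0)^-1; split=> //.
- apply/is_PsE; split=> // f f_small.
  by rewrite rt dotvZr dotv_horner_mx // dotvC q_orth ?mulr0.
have small_rq : (size (r - q)%R <= s)%N.
  by rewrite -ltnS -sz_r size_monicB // sz_r sz_q.
have : (lead_coef r0)^-1 * dotv v v = dotv t t.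
  rewrite -dotvZl -rt dotv_horner_mx //.
  have -> : M r *m v = M (r - q) *m v + t by rewrite -mulmxDl -rmorphD subrK.
  by rewrite dotvDr dotvC (q_orth small_rq) add0r.
move=> kvv_tt; rewrite -(@pmulr_lgt0 _ (dotv v v)) ?dotvv_gt0 //.
by rewrite kvv_tt dotvv_gt0 Ps_vec_neq0.
Qed.

End PsBackward.

Lemma ps_step_twice (R : realType) (n : nat) (A : 'M[R]_n.+1) s v :
  A^T = A -> normv v = 1 -> is_grade A v s.+1 ->
  ps_step A s (ps_step A s v) = v.
Proof.
move=> symA nv1 grade_v.
have [[m [_ [sz_m]]]] := grade_v; rewrite polyappE => m_annih _.
have [q Ps_q] := Ps_exists (krylov_row_free grade_v).
have [r [k [Ps_r k_gt0 rt]]] := Ps_back symA grade_v sz_m m_annih Ps_q.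
set t := horner_mx A q *m v in Ps_r rt.
have t_gt0 : 0 < normv t by rewrite normv_gt0 (Ps_vec_neq0 grade_v Ps_q).
rewrite (ps_stepE Ps_q) -/t {1}/normalize (ps_stepE (is_PsZ _ Ps_r)).
rewrite -scalemxAr rt scalerA normalizeZ ?normalize_id //.
by rewrite mulr_gt0 ?invr_gt0.
Qed.

Theorem theorem4p1 (R : realType) (n : nat) (A : 'M[R]_n) (s : nat)
    (v0 : 'cV[R]_n) :
  A^T = A ->
  (1 <= s)%N ->
  (exists d, is_minpoly_deg A d /\ (s < d)%N) ->
  normv v0 = 1 ->
  is_grade A v0 s.+1 ->
  forall k : nat, iterv A s v0 (2 * k) = v0.
Proof.
case: n A v0 => [|n] A v0 symA _ _ nv1 grade_v0.
  move: nv1; rewrite /normv /dotv big_ord0 sqrtr0 => /eqP.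
  by rewrite eq_sym oner_eq0.
elim=> [|k IHk]; first by rewrite muln0.
have -> : (2 * k.+1 = (2 * k).+2)%N by rewrite mulnS.
by rewrite !iterv_succ IHk ps_step_twice.
Qed.
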